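(* Let $a,b$ be non-zero constants with $a\neq b$, and let $w=w(x,y,z)$ be a function on an open set $B\subset\mathbb{R}^3$ with continuous second derivatives and $w_x\neq 0$. On $B\times\mathbb{R}^2$ with coordinates $(x,y,z,p_0,p_1)$ consider the bivectors $P_0,P_1$ with components (so that $\{f,g\}_i=\sum_{\alpha,\beta}P_i^{\alpha\beta}\partial_\alpha f\,\partial_\beta g$) \[ P_0= \begin{pmatrix} 0&0&0&-w_z/w_x&-w_y/w_x\\ 0&0&0&0&1\\ 0&0&0&1&0\\ w_z/w_x&0&-1&0&0\\ w_y/w_x&-1&0&0&0 \end{pmatrix}, \qquad P_1= \begin{pmatrix} 0&0&0&0&0\\ 0&0&0&0&b\\ 0&0&0&a&0\\ 0&0&-a&0&0\\ 0&-b&0&0&0 \end{pmatrix}. \] Then $P_0$ and $P_1$ define a compatible Poisson pencil (i.e. $P_0+\lambda P_1$ satisfies the Jacobi identity for all $\lambda$) if and only if $w$ satisfies the dispersionless Hirota equation \[ (b-a)\,w_x w_{yz}+a\, w_y w_{zx}-b\, w_z w_{xy}=0. \]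
   Context: A bivector $P$ defines a bracket $\{f,g\}=\sum_{\alpha,\beta}P^{\alpha\beta}\partial_\alpha f\partial_\beta g$; it is Poisson if this bracket satisfies the Jacobi identity. A compatible Poisson pencil is a pair of Poisson bivectors whose every linear combination $P_0+\lambda P_1$ is Poisson. *)

From HB Require Import structures.
From mathcomp Require Import all_boot all_order all_algebra.
From mathcomp Require Import all_classical all_reals all_analysis.
Set Implicit Arguments. Unset Strict Implicit. Unset Printing Implicit Defensive.
Import Order.TTheory GRing.Theory Num.Theory.
Import numFieldNormedType.Exports.
Local Open Scope classical_set_scope.
Local Open Scope ring_scope.

Definition ebasis (R : realType) (n : nat) (i : 'I_n) : 'rV[R]_n := delta_mx 0 i.

Definition partial (R : realType) (n : nat) (f : 'rV[R]_n -> R) (i : 'I_n)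
  (x : 'rV[R]_n) : R := 'D_(ebasis R i) f x.

Definition C2_on (R : realType) (n : nat) (A : set 'rV[R]_n) (f : 'rV[R]_n -> R) :=
  forall x, A x ->
    (forall i, derivable f x (ebasis R i)) /\
    (forall i j, derivable (partial f i) x (ebasis R j)) /\
    (forall i j, {for x, continuous (partial (partial f i) j)}).

Definition bivector (R : realType) (n : nat) := 'I_n -> 'I_n -> 'rV[R]_n -> R.

Definition bracket (R : realType) (n : nat) (P : bivector R n)
  (f g : 'rV[R]_n -> R) : 'rV[R]_n -> R :=
  fun u => \sum_(a < n) \sum_(b < n) P a b u * partial f a u * partial g b u.

Definition is_Poisson_on (R : realType) (n : nat) (D : set 'rV[R]_n) (P : bivector R n) :=
  (forall a b u, D u -> P a b u = - P b a u) /\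
  forall f g h : 'rV[R]_n -> R, C2_on D f -> C2_on D g -> C2_on D h ->
    forall u, D u ->
      bracket P f (bracket P g h) u + bracket P g (bracket P h f) u
      + bracket P h (bracket P f g) u = 0.

Definition pencil (R : realType) (n : nat) (P0 P1 : bivector R n) (lam : R) : bivector R n :=
  fun a b u => P0 a b u + lam * P1 a b u.

Definition compatible_Poisson_pencil (R : realType) (n : nat) (D : set 'rV[R]_n)
  (P0 P1 : bivector R n) :=
  is_Poisson_on D P0 /\ is_Poisson_on D P1 /\
  forall lam : R, is_Poisson_on D (pencil P0 P1 lam).

(* coordinates on B x R^2: u = (x, y, z, p0, p1) = (u_0, ..., u_4);
   proj3 u = (x, y, z) *)
Definition proj3 (R : realType) (u : 'rV[R]_5) : 'rV[R]_3 :=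
  \row_(i < 3) u 0 (widen_ord (isT : (3 <= 5)%N) i).

Definition domain5 (R : realType) (B : set 'rV[R]_3) : set 'rV[R]_5 :=
  [set u | B (proj3 u)].

Definition i3x : 'I_3 := @Ordinal 3 0 isT.
Definition i3y : 'I_3 := @Ordinal 3 1 isT.
Definition i3z : 'I_3 := @Ordinal 3 2 isT.

Definition P0_hirota (R : realType) (w : 'rV[R]_3 -> R) : bivector R 5 :=
  fun i j u =>
    let X := proj3 u in
    let wx := partial w i3x X in
    let wy := partial w i3y X in
    let wz := partial w i3z X in
    match val i, val j with
    | 0%N, 3%N => - (wz / wx)
    | 0%N, 4%N => - (wy / wx)
    | 1%N, 4%N => 1
    | 2%N, 3%N => 1
    | 3%N, 0%N => wz / wx
    | 3%N, 2%N => -1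
    | 4%N, 0%N => wy / wx
    | 4%N, 1%N => -1
    | _, _ => 0
    end.

Definition P1_hirota (R : realType) (a b : R) : bivector R 5 :=
  fun i j _ =>
    match val i, val j with
    | 1%N, 4%N => b
    | 2%N, 3%N => a
    | 3%N, 2%N => - a
    | 4%N, 1%N => - b
    | _, _ => 0
    end.

From HB Require Import structures.
From mathcomp Require Import all_boot all_order all_algebra.
From mathcomp Require Import all_classical all_reals all_analysis.
From mathcomp Require Import ring.
Set Implicit Arguments. Unset Strict Implicit. Unset Printing Implicit Defensive.
Import Order.TTheory GRing.Theory Num.Theory.
Import numFieldNormedType.Exports.
Local Open Scope classical_set_scope.
Local Open Scope ring_scope.

(* For a skew bivector [P], the Jacobiator of [f], [g], [h] at a point is the Schouten
   tensor [S^ijk = sum_a (P^ia d_a P^jk + P^ja d_a P^ki + P^ka d_a P^ij)] contracted with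
   the three gradients: the terms involving second derivatives cancel in the cyclic sum
   because Hessians are symmetric (Schwarz).  Testing on coordinate functions shows that
   [P] is Poisson exactly when [S] vanishes.
   Writing [A = w_z/w_x] and [C = w_y/w_x], both [P1] and every [P0 + lam P1] have the
   shape [hform A C s t r], whose Schouten tensor is a multiple of one scalar [hdefect].
   For the pencil, [w_x^2 hdefect] is [lam] times the Hirota expression, so the whole
   pencil is Poisson iff the dispersionless Hirota equation holds. *)

Section Schouten.
Variables (R : comRingType) (n : nat).
Local Notation I := 'I_n.

Lemma exchange_big12 (F : I -> I -> I -> I -> R) :
  \sum_a \sum_b \sum_c \sum_d F a b c d = \sum_b \sum_a \sum_c \sum_d F a b c d.
Proof. exact: exchange_big. Qed.

Lemma exchange_big23 (F : I -> I -> I -> I -> R) :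
  \sum_a \sum_b \sum_c \sum_d F a b c d = \sum_a \sum_c \sum_b \sum_d F a b c d.
Proof. by apply: eq_bigr => a _; exact: exchange_big. Qed.

Lemma exchange_big34 (F : I -> I -> I -> I -> R) :
  \sum_a \sum_b \sum_c \sum_d F a b c d = \sum_a \sum_b \sum_d \sum_c F a b c d.
Proof. by apply: eq_bigr => a _; apply: eq_bigr => b _; exact: exchange_big. Qed.

(* [p] and [dp c] stand for the values of a bivector and of its [c]-th partial
   derivative at a point; jets of functions are given by gradients [f1] and
   Hessians [f2]. *)
Variables (p : I -> I -> R) (dp : I -> I -> I -> R).
Hypothesis p_skew : forall a b, p a b = - p b a.

Definition pbracket (f1 X : I -> R) := \sum_a \sum_c p a c * f1 a * X c.

Definition dbracket (g1 : I -> R) (g2 : I -> I -> R) (h1 : I -> R) (h2 : I -> I -> R)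
    (c : I) :=
  \sum_j \sum_k (dp c j k * g1 j * h1 k + p j k * g2 j c * h1 k + p j k * g1 j * h2 k c).

Definition schouten i j k :=
  \sum_a (p i a * dp a j k + p j a * dp a k i + p k a * dp a i j).

Definition dp_term f1 g1 h1 :=
  \sum_a \sum_c \sum_j \sum_k p a c * f1 a * (dp c j k * g1 j * h1 k).
Definition hess_term_l f1 (g2 : I -> I -> R) h1 :=
  \sum_a \sum_c \sum_j \sum_k p a c * f1 a * (p j k * g2 j c * h1 k).
Definition hess_term_r f1 g1 (h2 : I -> I -> R) :=
  \sum_a \sum_c \sum_j \sum_k p a c * f1 a * (p j k * g1 j * h2 k c).

Lemma pbracket_dbracket f1 g1 g2 h1 h2 :
  pbracket f1 (dbracket g1 g2 h1 h2)
  = dp_term f1 g1 h1 + hess_term_l f1 g2 h1 + hess_term_r f1 g1 h2.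
Proof.
rewrite /pbracket /dbracket -!big_split; apply: eq_bigr => a _.
rewrite -!big_split /=; apply: eq_bigr => c _.
rewrite mulr_sumr -!big_split; apply: eq_bigr => j _.
by rewrite mulr_sumr -!big_split; apply: eq_bigr => k _; rewrite !mulrDr.
Qed.

(* Skew-symmetry of [p] against symmetry of the Hessian [g2]. *)
Lemma hess_terms_cancel f1 g2 h1 :
  (forall i j, g2 i j = g2 j i) -> hess_term_l f1 g2 h1 + hess_term_r h1 f1 g2 = 0.
Proof.
move=> g2_sym; rewrite /hess_term_l /hess_term_r.
rewrite [X in _ + X]exchange_big12 [X in _ + X]exchange_big23 [X in _ + X]exchange_big12.
rewrite [X in _ + X]exchange_big34 [X in _ + X]exchange_big23.
rewrite -big_split /=; apply: big1 => a _; rewrite -big_split /=; apply: big1 => c _.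
rewrite -big_split /=; apply: big1 => j _; rewrite -big_split /=; apply: big1 => k _.
by rewrite (p_skew k j) (g2_sym c j); ring.
Qed.

Lemma dp_terms_schouten f1 g1 h1 :
  dp_term f1 g1 h1 + dp_term g1 h1 f1 + dp_term h1 f1 g1
  = \sum_i \sum_j \sum_k schouten i j k * f1 i * g1 j * h1 k.
Proof.
have -> : \sum_i \sum_j \sum_k schouten i j k * f1 i * g1 j * h1 k
  = \sum_i \sum_j \sum_k \sum_a (p i a * f1 i * (dp a j k * g1 j * h1 k))
  + \sum_i \sum_j \sum_k \sum_a (p j a * g1 j * (dp a k i * h1 k * f1 i))
  + \sum_i \sum_j \sum_k \sum_a (p k a * h1 k * (dp a i j * f1 i * g1 j)).
  rewrite -!big_split /=; apply: eq_bigr => i _; rewrite -!big_split /=; apply: eq_bigr => j _.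
  rewrite -!big_split /=; apply: eq_bigr => k _.
  by rewrite !mulr_suml -!big_split /=; apply: eq_bigr => a _; ring.
congr (_ + _ + _).
- by rewrite [RHS]exchange_big34 [RHS]exchange_big23.
- by rewrite [LHS]exchange_big34 [LHS]exchange_big23 [LHS]exchange_big12 [LHS]exchange_big34.
- by rewrite [LHS]exchange_big23 [LHS]exchange_big12 [LHS]exchange_big34 [LHS]exchange_big23.
Qed.

Lemma jacobiator_schouten f1 f2 g1 g2 h1 h2 :
  (forall i j, f2 i j = f2 j i) -> (forall i j, g2 i j = g2 j i) ->
  (forall i j, h2 i j = h2 j i) ->
  pbracket f1 (dbracket g1 g2 h1 h2) + pbracket g1 (dbracket h1 h2 f1 f2)
    + pbracket h1 (dbracket f1 f2 g1 g2)
  = \sum_i \sum_j \sum_k schouten i j k * f1 i * g1 j * h1 k.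
Proof.
move=> f2_sym g2_sym h2_sym; rewrite !pbracket_dbracket -dp_terms_schouten.
have := hess_terms_cancel f1 h1 g2_sym; have := hess_terms_cancel g1 f1 h2_sym.
have := hess_terms_cancel h1 g1 f2_sym.
move: (hess_term_l _ _ _) (hess_term_r _ _ _) (hess_term_l _ _ _) (hess_term_r _ _ _).
move: (hess_term_l _ _ _) (hess_term_r _ _ _) => A1 B1 A2 B2 A3 B3 E1 E2 E3.
apply/eqP; rewrite -subr_eq0; apply/eqP.
by transitivity ((A1 + B1) + (A2 + B2) + (A3 + B3)); [ring | rewrite E1 E2 E3 !addr0].
Qed.
End Schouten.

Section Schwarz.
Variable R : realType.

Lemma derive_along_eq (V1 V2 W : normedModType R) (f : V1 -> W) (g : V2 -> W) x v y w :
  (forall h : R, f (h *: v + x) = g (h *: w + y)) ->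
  'D_v f x = 'D_w g y /\ (derivable f x v <-> derivable g y w).
Proof.
move=> fg; have fg0 := fg 0; rewrite !scale0r !add0r in fg0.
have E : (fun h : R => h^-1 *: ((f \o shift x) (h *: v) - f x)) =
          (fun h : R => h^-1 *: ((g \o shift y) (h *: w) - g y)).
  by apply/funext => h /=; rewrite fg fg0.
by rewrite /derive /derivable E.
Qed.

Lemma is_derive_line (V W : normedModType R) (f : V -> W) (v y : V) (s : R) :
  derivable f (s *: v + y) v ->
  is_derive s 1 (fun t : R => f (t *: v + y)) ('D_v f (s *: v + y)).
Proof.
move=> df.
have line h : f ((h *: 1 + s) *: v + y) = f (h *: v + (s *: v + y)).
  by rewrite [h *: 1]mulr1 scalerDl addrA.
have [dE fD] := @derive_along_eq _ _ _ (fun t : R => f (t *: v + y)) f s 1 (s *: v + y) v line.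
by apply: DeriveDef; [exact/fD | rewrite dE].
Qed.

Lemma mvt_is_derive (phi phi' : R -> R) (h : R) : 0 < h ->
  (forall t, 0 <= t <= h -> is_derive t 1 phi (phi' t)) ->
  exists2 s, 0 < s < h & phi h - phi 0 = phi' s * h.
Proof.
move=> h0 dphi.
have [||s] := @MVT _ phi phi' 0 h h0.
- by move=> t; rewrite in_itv /= => /andP[t0 th]; apply: dphi; rewrite !ltW.
- apply: derivable_within_continuous => t; rewrite in_itv /= => ht.
  by have [] := dphi t ht.
- by rewrite in_itv /= subr0; exists s.
Qed.

Lemma second_difference (n : nat) (A : set 'rV[R]_n) (f : 'rV[R]_n -> R) x i j h :
  0 < h -> C2_on A f ->
  (forall a b, 0 <= a <= h -> 0 <= b <= h ->
     A (a *: ebasis R i + (b *: ebasis R j + x))) ->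
  exists s t, [/\ 0 <= s <= h, 0 <= t <= h &
   f (h *: ebasis R i + (h *: ebasis R j + x)) - f (h *: ebasis R j + x)
     - (f (h *: ebasis R i + x) - f x)
   = partial (partial f i) j (t *: ebasis R j + (s *: ebasis R i + x)) * h * h].
Proof.
move=> h0 C2f sqA; set ei := ebasis R i; set ej := ebasis R j.
have h_in : 0 <= h <= h by apply/andP; split; [exact: ltW | exact: lexx].
have sq_x a : 0 <= a <= h -> A (a *: ei + x).
  move=> ha; rewrite -[x](add0r x) -[0](scale0r ej).
  by apply: sqA => //; apply/andP; split; [exact: lexx | exact: ltW].
have [|s /andP[s0 sh] Es] := @mvt_is_derive
  (fun a => f (a *: ei + (h *: ej + x)) - f (a *: ei + x))
  (fun a => partial f i (a *: ei + (h *: ej + x)) - partial f i (a *: ei + x)) h h0.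
  move=> a ha; apply: is_deriveB; apply: is_derive_line.
  - exact: (C2f _ (sqA a h ha h_in)).1.
  - exact: (C2f _ (sq_x a ha)).1.
have s_in : 0 <= s <= h by rewrite !ltW.
have [|t /andP[t0 th] Et] := @mvt_is_derive
  (fun b => partial f i (b *: ej + (s *: ei + x)))
  (fun b => partial (partial f i) j (b *: ej + (s *: ei + x))) h h0.
  move=> b hb; apply: is_derive_line.
  by have := (C2f _ (sqA s b s_in hb)).2.1 i j; rewrite addrCA.
exists s, t; split; rewrite ?ltW //.
move: Es Et; rewrite /= !scale0r !add0r [s *: ei + (_ + _)]addrCA => Es Et.
transitivity ((partial f i (h *: ej + (s *: ei + x)) - partial f i (s *: ei + x)) * h).
  by rewrite -Es; ring.
by rewrite Et.
Qed.

Lemma norm_square_le (V : normedModType R) (v w : V) a b h :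
  0 <= a <= h -> 0 <= b <= h -> `|a *: v + b *: w| <= h * (`|v| + `|w|).
Proof.
move=> /andP[a0 ah] /andP[b0 bh]; apply: (le_trans (ler_normD _ _)).
rewrite !normrZ (ger0_norm a0) (ger0_norm b0) mulrDr.
by apply: lerD; apply: ler_wpM2r.
Qed.

Lemma mixed_partials_meet (n : nat) (A : set 'rV[R]_n) (f : 'rV[R]_n -> R) x i j h :
  0 < h -> C2_on A f ->
  (forall a b, 0 <= a <= h -> 0 <= b <= h ->
     A (a *: ebasis R i + (b *: ebasis R j + x))) ->
  exists s t s' t', [/\ 0 <= s <= h, 0 <= t <= h, 0 <= s' <= h, 0 <= t' <= h &
    partial (partial f i) j (t *: ebasis R j + (s *: ebasis R i + x))
    = partial (partial f j) i (t' *: ebasis R i + (s' *: ebasis R j + x))].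
Proof.
move=> h0 C2f sq_ij.
have sq_ji a b : 0 <= a <= h -> 0 <= b <= h -> A (a *: ebasis R j + (b *: ebasis R i + x)).
  by move=> ha hb; rewrite addrCA; apply: sq_ij.
have [s [t [hs ht E1]]] := second_difference h0 C2f sq_ij.
have [s' [t' [hs' ht' E2]]] := second_difference h0 C2f sq_ji.
exists s, t, s', t'; split; [exact: hs | exact: ht | exact: hs' | exact: ht' |].
rewrite [h *: ebasis R j + _]addrCA in E2.
move: E1 E2; move: (partial (partial f i) j _) (partial (partial f j) i _) => P Q.
move: (f (h *: _ + (h *: _ + x))) (f (h *: ebasis R i + x)) (f (h *: ebasis R j + x)) (f x).
move=> X Y Z W E1 E2; have hn0 : h != 0 by rewrite gt_eqF.
by apply: (mulIf hn0); apply: (mulIf hn0); rewrite -E1 -E2; ring.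
Qed.

Lemma schwarz (n : nat) (A : set 'rV[R]_n) (f : 'rV[R]_n -> R) x i j :
  open A -> A x -> C2_on A f ->
  partial (partial f i) j x = partial (partial f j) i x.
Proof.
move=> oA Ax C2f.
suff small e : 0 < e ->
    `|partial (partial f i) j x - partial (partial f j) i x| <= e.
  apply/eqP; rewrite -subr_eq0 -normr_le0; apply/ler_addgt0Pr => e /small.
  by rewrite add0r.
move=> e0; have e20 : 0 < e / 2 by rewrite divr_gt0.
have [_ [_ contC2]] := C2f x Ax.
have /cvgrPdist_lt /(_ _ e20) /nbhsr0P nearF := contC2 i j.
have /cvgrPdist_lt /(_ _ e20) /nbhsr0P nearG := contC2 j i.
have /nbhsr0P nearA : nbhs x A by apply: open_nbhs_nbhs.
have [d [d0 [dA [dF dG]]]] :=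
  filter_ex (filterI (nbhs_right_gt 0) (filterI nearA (filterI nearF nearG))).
have K0 : 0 < `|ebasis R i| + `|ebasis R j| + 1 by rewrite ltr_wpDl // addr_ge0.
pose h := d / (`|ebasis R i| + `|ebasis R j| + 1).
have h0 : 0 < h by rewrite divr_gt0.
have near_sq a b : 0 <= a <= h -> 0 <= b <= h ->
    `|x - (a *: ebasis R i + (b *: ebasis R j + x))| <= d.
  move=> ha hb; rewrite addrA opprD addrCA subrr addr0 normrN.
  apply: (le_trans (norm_square_le _ _ ha hb)).
  by rewrite /h mulrAC ler_pdivrMr // ler_pM2l // lerDl.
have [s [t [s' [t' [hs ht hs' ht' FG]]]]] :=
  mixed_partials_meet h0 C2f (fun a b ha hb => dA _ (near_sq a b ha hb)).
have := dF _ (near_sq _ _ hs ht); have := dG _ (near_sq _ _ ht' hs').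
rewrite [s *: _ + _]addrCA FG.
move: (partial (partial f j) i (t' *: _ + _)) => Q.
move: (partial (partial f i) j x) (partial (partial f j) i x) => Fx Gx dGq dFq.
rewrite [e]splitr (_ : Fx - Gx = (Fx - Q) + (Q - Gx)); last by ring.
apply: (le_trans (ler_normD _ _)); apply/ltW/ltrD; [exact: dFq | by rewrite distrC].
Qed.
End Schwarz.

Section PoissonCriterion.
Variables (R : realType) (n : nat).
Implicit Types (P : bivector R n) (f g h : 'rV[R]_n -> R) (D : set 'rV[R]_n).

Definition grad f u (a : 'I_n) := partial f a u.
Definition hessian f u (a c : 'I_n) := partial (partial f a) c u.
Definition bivector_at P u (a b : 'I_n) := P a b u.
Definition dbivector_at P u (c a b : 'I_n) := partial (P a b) c u.

Lemma partial_bracket P g h u c :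
  (forall a b, derivable (P a b) u (ebasis R c)) ->
  (forall a, derivable (partial g a) u (ebasis R c)) ->
  (forall b, derivable (partial h b) u (ebasis R c)) ->
  partial (bracket P g h) c u
  = dbracket (bivector_at P u) (dbivector_at P u)
      (grad g u) (hessian g u) (grad h u) (hessian h u) c.
Proof.
move=> dP dg dh.
have dPg j k : derivable (P j k * partial g j) u (ebasis R c) by exact: derivableM.
have -> : bracket P g h = \sum_j \sum_k (P j k * partial g j * partial h k).
  by apply/funext => v; rewrite /bracket fct_sumE; apply: eq_bigr => j _; rewrite fct_sumE.
rewrite /partial derive_sum; last first.
  by move=> j; apply: derivable_sum => k; exact: derivableM (dPg j k) (dh k).
apply: eq_bigr => j _; rewrite derive_sum; last by move=> k; exact: derivableM (dPg j k) (dh k).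
apply: eq_bigr => k _; rewrite deriveM; [|exact: dPg|exact: dh].
rewrite deriveM /=; [|exact: dP|exact: dg].
have mul_fctE (X Y : 'rV[R]_n -> R) : (X * Y) u = X u * Y u by [].
have scaleE (a b : R) : a *: b = a * b by [].
rewrite mul_fctE !scaleE /bivector_at /dbivector_at /grad /hessian /partial.
(* [ring] is very slow on derivative atoms, so they are generalized first. *)
move: (P j k u) ('D_(ebasis R j) g u) ('D_(ebasis R k) h u) ('D_(ebasis R c) (P j k) u).
move: ('D_(ebasis R c) (fun x => 'D_(ebasis R j) g x) u).
by move: ('D_(ebasis R c) (fun x => 'D_(ebasis R k) h x) u) => *; ring.
Qed.

Lemma bracket_bracket D P f g h u :
  D u -> C2_on D g -> C2_on D h -> (forall a b c, derivable (P a b) u (ebasis R c)) ->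
  bracket P f (bracket P g h) u
  = pbracket (bivector_at P u) (grad f u)
      (dbracket (bivector_at P u) (dbivector_at P u)
         (grad g u) (hessian g u) (grad h u) (hessian h u)).
Proof.
move=> Du C2g C2h dP; rewrite /bracket /pbracket.
apply: eq_bigr => a _; apply: eq_bigr => c _; congr (_ * _).
rewrite -partial_bracket //.
- by move=> j; exact: (C2g u Du).2.1.
- by move=> j; exact: (C2h u Du).2.1.
Qed.

Lemma hessian_sym D f u a c :
  open D -> D u -> C2_on D f -> hessian f u a c = hessian f u c a.
Proof. exact: schwarz. Qed.

Lemma jacobi_schouten D P f g h u :
  open D -> (forall a b, P a b u = - P b a u) ->
  (forall a b c, derivable (P a b) u (ebasis R c)) ->
  D u -> C2_on D f -> C2_on D g -> C2_on D h ->
  bracket P f (bracket P g h) u + bracket P g (bracket P h f) u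
    + bracket P h (bracket P f g) u
  = \sum_i \sum_j \sum_k schouten (bivector_at P u) (dbivector_at P u) i j k
      * grad f u i * grad g u j * grad h u k.
Proof.
move=> oD P_skew dP Du C2f C2g C2h.
rewrite (bracket_bracket f Du C2g C2h dP) (bracket_bracket g Du C2h C2f dP).
rewrite (bracket_bracket h Du C2f C2g dP).
exact: (jacobiator_schouten (dbivector_at P u) P_skew (grad f u) (grad g u) (grad h u)
  (fun a c => hessian_sym a c oD Du C2f) (fun a c => hessian_sym a c oD Du C2g)
  (fun a c => hessian_sym a c oD Du C2h)).
Qed.

Definition coordf (i : 'I_n) (u : 'rV[R]_n) : R := u 0 i.

Lemma coordf_cvg (i a : 'I_n) u :
  (fun h : R => h^-1 *: ((coordf i \o shift u) (h *: ebasis R a) - coordf i u)) @ 0^'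
    --> ((a == i)%:R : R).
Proof.
apply: cvg_near_cst; near=> h.
have hn0 : h != 0 by near: h; exact: nbhs_dnbhs_neq.
rewrite /coordf /= !mxE eqxx /= [i == a]eq_sym addrK.
exact: mulKf.
Unshelve. all: by end_near.
Qed.

Lemma partial_coordf (i a : 'I_n) u : partial (coordf i) a u = (a == i)%:R.
Proof. by apply: cvg_lim; [exact: norm_hausdorff | exact: coordf_cvg]. Qed.

Lemma C2_coordf D (i : 'I_n) : C2_on D (coordf i).
Proof.
have dcoord a : partial (coordf i) a = cst ((a == i)%:R).
  by apply/funext => v; rewrite partial_coordf.
move=> x _; split; first by move=> a; apply/cvg_ex; eexists; exact: coordf_cvg.
split=> [a b|a b]; rewrite dcoord; first exact: derivable_cst.
have -> : partial (cst ((a == i)%:R : R)) b = cst 0 :> ('rV[R]_n -> R).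
  by apply/funext => v; rewrite /partial derive_cst.
exact: cst_continuous.
Qed.

Lemma sum_mul_delta (F : 'I_n -> R) (i : 'I_n) : \sum_j F j * (j == i)%:R = F i.
Proof.
rewrite (bigD1 i) //= eqxx mulr1 big1 ?addr0 // => j /negbTE ->.
by rewrite mulr0.
Qed.

Lemma Poisson_iff_schouten D P :
  open D -> (forall a b u, P a b u = - P b a u) ->
  (forall a b c u, D u -> derivable (P a b) u (ebasis R c)) ->
  is_Poisson_on D P <->
  forall u, D u -> forall i j k, schouten (bivector_at P u) (dbivector_at P u) i j k = 0.
Proof.
move=> oD P_skew dP.
split=> [[_ jacobiP] u Du i j k | schouten0].
  have C2x := C2_coordf (D:=D).
  have := jacobiP _ _ _ (C2x i) (C2x j) (C2x k) u Du.
  rewrite (jacobi_schouten oD (fun a b => P_skew a b u) (fun a b c => dP a b c u Du) Du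
    (C2x i) (C2x j) (C2x k)) /grad.
  under eq_bigr do under eq_bigr do under eq_bigr do rewrite !partial_coordf.
  under eq_bigr do under eq_bigr do rewrite sum_mul_delta.
  by under eq_bigr do rewrite sum_mul_delta; rewrite sum_mul_delta.
split=> [a b u _ | f g h C2f C2g C2h u Du]; first exact: P_skew.
rewrite (jacobi_schouten oD (fun a b => P_skew a b u) (fun a b c => dP a b c u Du) Du C2f C2g C2h).
by apply: big1 => i _; apply: big1 => j _; apply: big1 => k _; rewrite schouten0 // !mul0r.
Qed.
End PoissonCriterion.

Section HirotaFamily.
Variable R : realType.

Definition o0 : 'I_5 := @Ordinal 5 0 isT.
Definition o1 : 'I_5 := @Ordinal 5 1 isT.
Definition o2 : 'I_5 := @Ordinal 5 2 isT.
Definition o3 : 'I_5 := @Ordinal 5 3 isT.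
Definition o4 : 'I_5 := @Ordinal 5 4 isT.

Lemma sum5 (F : 'I_5 -> R) : \sum_(a < 5) F a = F o0 + F o1 + F o2 + F o3 + F o4.
Proof.
rewrite !big_ord_recr big_ord0 /= add0r.
by congr (F _ + F _ + F _ + F _ + F _); apply/val_inj.
Qed.

(* At a point where [A = w_z/w_x] and [C = w_y/w_x], the pencil [P0 + lam P1] is
   [hform A C 1 (1 + lam b) (1 + lam a)] and [P1] is [hform A C 0 b a]. *)
Definition hform (A C s t r : R) (i j : 'I_5) : R :=
  match val i, val j with
  | 0%N, 3%N => - s * A
  | 0%N, 4%N => - s * C
  | 1%N, 4%N => t
  | 2%N, 3%N => r
  | 3%N, 0%N => s * A
  | 3%N, 2%N => - r
  | 4%N, 0%N => s * C
  | 4%N, 1%N => - t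
  | _, _ => 0
  end.

(* A gradient with respect to [(x, y, z)], padded with zeros in [(p0, p1)]. *)
Definition grad_xyz (x y z : R) (c : 'I_5) : R :=
  match val c with 0%N => x | 1%N => y | 2%N => z | _ => 0 end.

Definition dhform (Ax Ay Az Cx Cy Cz s : R) (c i j : 'I_5) : R :=
  match val i, val j with
  | 0%N, 3%N => - s * grad_xyz Ax Ay Az c
  | 0%N, 4%N => - s * grad_xyz Cx Cy Cz c
  | 3%N, 0%N => s * grad_xyz Ax Ay Az c
  | 4%N, 0%N => s * grad_xyz Cx Cy Cz c
  | _, _ => 0
  end.

Definition hdefect (A C Ax Ay Cx Cz s t r : R) :=
  s * (s * (A * Cx - C * Ax) - r * Cz + t * Ay).

Lemma hform_skew A C s t r i j : hform A C s t r i j = - hform A C s t r j i.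
Proof.
by case: i => [[|[|[|[|[|i]]]]] Hi] //; case: j => [[|[|[|[|[|j]]]]] Hj] //=;
  rewrite /hform /=; ring.
Qed.

Lemma schouten_hform A C Ax Ay Az Cx Cy Cz s t r i j k :
  exists c : R, schouten (hform A C s t r) (dhform Ax Ay Az Cx Cy Cz s) i j k
    = c * hdefect A C Ax Ay Cx Cz s t r.
Proof.
rewrite /schouten sum5 /hdefect /hform /dhform /grad_xyz.
case: i => [[|[|[|[|[|i]]]]] Hi] //; case: j => [[|[|[|[|[|j]]]]] Hj] //;
case: k => [[|[|[|[|[|k]]]]] Hk] //=;
  first [ exists 0; ring | exists 1; ring | exists (-1); ring ].
Qed.

Lemma schouten_hform034 A C Ax Ay Az Cx Cy Cz s t r :
  schouten (hform A C s t r) (dhform Ax Ay Az Cx Cy Cz s) o0 o3 o4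
  = hdefect A C Ax Ay Cx Cz s t r.
Proof. by rewrite /schouten sum5 /hdefect /hform /dhform /grad_xyz /=; ring. Qed.
End HirotaFamily.

Section HirotaField.
Variable R : realType.

Lemma proj3D_scale (h : R) (v u : 'rV[R]_5) : proj3 (h *: v + u) = h *: proj3 v + proj3 u.
Proof. by apply/rowP => i; rewrite !mxE. Qed.

Lemma proj3_ebasis :
  [/\ proj3 (ebasis R o0) = ebasis R i3x, proj3 (ebasis R o1) = ebasis R i3y,
      proj3 (ebasis R o2) = ebasis R i3z, proj3 (ebasis R o3) = 0
    & proj3 (ebasis R o4) = 0].
Proof. by split; apply/rowP => i; rewrite !mxE; case: i => [[|[|[|?]]] ?]. Qed.

Lemma ord5_cases (c : 'I_5) : c = o0 \/ c = o1 \/ c = o2 \/ c = o3 \/ c = o4.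
Proof.
case: c => [[|[|[|[|[|c]]]]] Hc] //;
  [left | right; left | do 2 right; left | do 3 right; left | do 4 right]; exact: val_inj.
Qed.

Lemma partial_proj3 (F : 'rV[R]_3 -> R) (c : 'I_5) (u : 'rV[R]_5) :
  (forall c', derivable F (proj3 u) (ebasis R c')) ->
  derivable (fun x => F (proj3 x)) u (ebasis R c) /\
  partial (fun x => F (proj3 x)) c u =
    grad_xyz (partial F i3x (proj3 u)) (partial F i3y (proj3 u)) (partial F i3z (proj3 u)) c.
Proof.
move=> dF.
have along c' w : proj3 (ebasis R c') = w -> derivable F (proj3 u) w ->
    derivable (fun x => F (proj3 x)) u (ebasis R c') /\
    'D_(ebasis R c') (fun x => F (proj3 x)) u = 'D_w F (proj3 u).
  move=> e_w dFw; have [-> dE] : 'D_(ebasis R c') (fun x => F (proj3 x)) u = 'D_w F (proj3 u)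
      /\ (derivable (fun x => F (proj3 x)) u (ebasis R c') <-> derivable F (proj3 u) w).
    by apply: derive_along_eq => h; rewrite proj3D_scale e_w.
  by split; first exact/dE.
have [e0 e1 e2 e3 e4] := proj3_ebasis.
have dF0 : derivable F (proj3 u) 0 by exact: derivable0.
case: (ord5_cases c) => [->|[->|[->|[->|->]]]].
- exact: along e0 (dF _).
- exact: along e1 (dF _).
- exact: along e2 (dF _).
- by have [? E] := along _ _ e3 dF0; split=> //; rewrite /partial E derive0.
- by have [? E] := along _ _ e4 dF0; split=> //; rewrite /partial E derive0.
Qed.

Lemma partial_scale_proj3 (F : 'rV[R]_3 -> R) (k : R) (c : 'I_5) (u : 'rV[R]_5) :
  (forall c', derivable F (proj3 u) (ebasis R c')) ->
  derivable (fun x => k * F (proj3 x)) u (ebasis R c) /\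
  partial (fun x => k * F (proj3 x)) c u =
    k * grad_xyz (partial F i3x (proj3 u)) (partial F i3y (proj3 u))
                 (partial F i3z (proj3 u)) c.
Proof.
move=> dF; have [dFc FcE] := partial_proj3 c dF.
have -> : (fun x => k * F (proj3 x)) = cst k * (fun x => F (proj3 x)) by [].
split; first exact: derivableM (derivable_cst k u _) dFc.
by rewrite /partial deriveM ?derive_cst ?scaler0 ?addr0 -?FcE //; exact: derivable_cst.
Qed.

Definition hfield (Af Cf : 'rV[R]_3 -> R) (s t r : R) : bivector R 5 :=
  fun i j u => hform (Af (proj3 u)) (Cf (proj3 u)) s t r i j.

Definition dhfield (Af Cf : 'rV[R]_3 -> R) (s : R) (u : 'rV[R]_5) :=
  dhform (partial Af i3x (proj3 u)) (partial Af i3y (proj3 u)) (partial Af i3z (proj3 u))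
         (partial Cf i3x (proj3 u)) (partial Cf i3y (proj3 u)) (partial Cf i3z (proj3 u)) s.

Lemma partial_hfield Af Cf s t r i j c u :
  (forall c', derivable Af (proj3 u) (ebasis R c')) ->
  (forall c', derivable Cf (proj3 u) (ebasis R c')) ->
  derivable (hfield Af Cf s t r i j) u (ebasis R c) /\
  partial (hfield Af Cf s t r i j) c u = dhfield Af Cf s u c i j.
Proof.
move=> dA dC.
case: i => [[|[|[|[|[|i]]]]] Hi] //; case: j => [[|[|[|[|[|j]]]]] Hj] //;
  rewrite /hfield /hform /dhfield /dhform /=;
  match goal with
  | |- context[Af (proj3 _)] => exact: partial_scale_proj3 dA
  | |- context[Cf (proj3 _)] => exact: partial_scale_proj3 dC
  | _ => by split; [exact: derivable_cst | rewrite /partial derive_cst]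
  end.
Qed.

Lemma proj3B (u v : 'rV[R]_5) : proj3 (u - v) = proj3 u - proj3 v.
Proof. by apply/rowP => i; rewrite !mxE. Qed.

Lemma norm_proj3_le (d : 'rV[R]_5) : `|proj3 d| <= `|d|.
Proof.
rewrite [leLHS]/Num.Def.normr /= mx_normrE (bigmax_le _ (normr_ge0 _)) //= => -[i j] _.
rewrite mxE /= [leRHS]/Num.Def.normr /= mx_normrE.
exact: (le_bigmax 0 (fun ij : 'I_1 * 'I_5 => `|d ij.1 ij.2|) (0, widen_ord (isT : (3 <= 5)%N) j)).
Qed.

Lemma open_domain5 (B : set 'rV[R]_3) : open B -> open (domain5 B).
Proof.
rewrite !openE => oB u /oB /nbhs_normP [e e0 Be].
apply: (@nbhs_normP R _ u (domain5 B)).2; exists e => //= v uv; apply: Be => /=.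
by rewrite -proj3B; apply: le_lt_trans (norm_proj3_le _) uv.
Qed.

(* [proj3] is onto: [X] is the projection of [(X, 0, 0)]. *)
Lemma domain5_forallP (B : set 'rV[R]_3) (Q : 'rV[R]_3 -> Prop) :
  (forall u, domain5 B u -> Q (proj3 u)) <-> (forall X, B X -> Q X).
Proof.
split=> [QB X BX | QB u Du]; last exact: QB.
pose u : 'rV[R]_5 := \row_(i < 5) if (i < 3)%N then X 0 (inord i) else 0.
have uX : proj3 u = X by apply/rowP => j; rewrite !mxE /= ltn_ord inord_val.
by rewrite -uX; apply: QB; rewrite /domain5 /= uX.
Qed.

Lemma hfield_Poisson_iff (B : set 'rV[R]_3) Af Cf s t r : open B ->
  (forall X, B X -> forall c, derivable Af X (ebasis R c) /\ derivable Cf X (ebasis R c)) ->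
  is_Poisson_on (domain5 B) (hfield Af Cf s t r) <->
  forall X, B X -> hdefect (Af X) (Cf X) (partial Af i3x X) (partial Af i3y X)
                           (partial Cf i3x X) (partial Cf i3z X) s t r = 0.
Proof.
move=> oB dAC; apply: (iff_trans _ (domain5_forallP B _)).
have dA u : domain5 B u -> forall c, derivable Af (proj3 u) (ebasis R c).
  by move=> Du c; exact: (dAC _ Du c).1.
have dC u : domain5 B u -> forall c, derivable Cf (proj3 u) (ebasis R c).
  by move=> Du c; exact: (dAC _ Du c).2.
have pE u : bivector_at (hfield Af Cf s t r) u = hform (Af (proj3 u)) (Cf (proj3 u)) s t r
  by [].
have dpE u : domain5 B u -> dbivector_at (hfield Af Cf s t r) u = dhfield Af Cf s u.
  move=> Du; apply/funext => c; apply/funext => i; apply/funext => j.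
  exact: (partial_hfield s t r i j c (dA u Du) (dC u Du)).2.
rewrite Poisson_iff_schouten; first last.
- by move=> a b c u Du; exact: (partial_hfield s t r a b c (dA u Du) (dC u Du)).1.
- by move=> a b u; exact: hform_skew.
- exact: open_domain5.
split=> [schouten0 u Du | defect0 u Du i j k].
  by have := schouten0 u Du o0 o3 o4; rewrite pE dpE // /dhfield schouten_hform034.
rewrite pE dpE // /dhfield.
have [k' ->] := schouten_hform (Af (proj3 u)) (Cf (proj3 u)) (partial Af i3x (proj3 u))
  (partial Af i3y (proj3 u)) (partial Af i3z (proj3 u)) (partial Cf i3x (proj3 u))
  (partial Cf i3y (proj3 u)) (partial Cf i3z (proj3 u)) s t r i j k.
by rewrite defect0 // mulr0.
Qed.
End HirotaField.

Section Hirota.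
Variable R : realType.

Lemma derive_div (V : normedModType R) (F G : V -> R) X v :
  derivable F X v -> derivable G X v -> G X != 0 ->
  derivable (fun Y => F Y / G Y) X v /\
  'D_v (fun Y => F Y / G Y) X = 'D_v F X / G X - F X * 'D_v G X / G X ^+ 2.
Proof.
move=> dF dG G0; have dV := derivableV G0 dG.
have -> : (fun Y => F Y / G Y) = F * (fun Y => (G Y)^-1) by [].
split; first exact: derivableM dF dV.
rewrite (deriveM dF dV) (deriveV G0 dG) /GRing.scale /=.
by move: ('D_v F X) ('D_v G X) (F X) (G X) G0 => *; field.
Qed.

Lemma hdefect_quot (a b lam wx wy wz wxx wxy wyx wxz wzx wyz wzy : R) :
  wx != 0 -> wzy = wyz -> wyx = wxy -> wxz = wzx ->
  hdefect (wz / wx) (wy / wx)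
    (wzx / wx - wz * wxx / wx ^+ 2) (wzy / wx - wz * wxy / wx ^+ 2)
    (wyx / wx - wy * wxx / wx ^+ 2) (wyz / wx - wy * wxz / wx ^+ 2)
    1 (1 + lam * b) (1 + lam * a) * wx ^+ 2
  = lam * ((b - a) * wx * wyz + a * wy * wzx - b * wz * wxy).
Proof. by move=> wx0 -> -> ->; rewrite /hdefect; field. Qed.

Lemma P1_hirota_hfield (a b : R) :
  P1_hirota a b = hfield (fun _ => 0) (fun _ => 0) 0 b a.
Proof.
apply/funext => i; apply/funext => j; apply/funext => u.
by case: i => [[|[|[|[|[|i]]]]] Hi]; case: j => [[|[|[|[|[|j]]]]] Hj];
  rewrite /P1_hirota /hfield /hform /=; ring.
Qed.

Lemma P1_hirota_Poisson (a b : R) (B : set 'rV[R]_3) :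
  open B -> is_Poisson_on (domain5 B) (P1_hirota a b).
Proof.
move=> oB; rewrite P1_hirota_hfield hfield_Poisson_iff // => X _.
by rewrite /hdefect mul0r.
Qed.

Definition ratio_zx (w : 'rV[R]_3 -> R) X := partial w i3z X / partial w i3x X.
Definition ratio_yx (w : 'rV[R]_3 -> R) X := partial w i3y X / partial w i3x X.

Lemma pencil_hirota_hfield (w : 'rV[R]_3 -> R) (a b lam : R) :
  pencil (P0_hirota w) (P1_hirota a b) lam
  = hfield (ratio_zx w) (ratio_yx w) 1 (1 + lam * b) (1 + lam * a).
Proof.
apply/funext => i; apply/funext => j; apply/funext => u.
rewrite /pencil /P0_hirota /P1_hirota /hfield /hform /ratio_zx /ratio_yx /=.
move: (partial w i3x (proj3 u)) (partial w i3y (proj3 u)) (partial w i3z (proj3 u)) => p q r.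
by case: i => [[|[|[|[|[|i]]]]] Hi]; case: j => [[|[|[|[|[|j]]]]] Hj] /=; ring.
Qed.

Definition hirota (a b : R) (w : 'rV[R]_3 -> R) X :=
  (b - a) * partial w i3x X * partial (partial w i3y) i3z X
  + a * partial w i3y X * partial (partial w i3z) i3x X
  - b * partial w i3z X * partial (partial w i3x) i3y X.

Section PencilCriterion.
Variables (B : set 'rV[R]_3) (w : 'rV[R]_3 -> R).
Hypotheses (oB : open B) (C2w : C2_on B w) (wx0 : forall X, B X -> partial w i3x X != 0).

Lemma partial_ratio i X c : B X ->
  derivable (fun Y => partial w i Y / partial w i3x Y) X (ebasis R c) /\
  partial (fun Y => partial w i Y / partial w i3x Y) c X
  = partial (partial w i) c X / partial w i3x X
    - partial w i X * partial (partial w i3x) c X / partial w i3x X ^+ 2.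
Proof.
move=> BX; have [_ [dw _]] := C2w BX; exact: derive_div (dw i c) (dw i3x c) (wx0 BX).
Qed.

Lemma hdefect_ratio (a b lam : R) X : B X ->
  hdefect (ratio_zx w X) (ratio_yx w X)
    (partial (ratio_zx w) i3x X) (partial (ratio_zx w) i3y X)
    (partial (ratio_yx w) i3x X) (partial (ratio_yx w) i3z X)
    1 (1 + lam * b) (1 + lam * a) * partial w i3x X ^+ 2
  = lam * hirota a b w X.
Proof.
move=> BX; rewrite /ratio_zx /ratio_yx !(partial_ratio _ _ BX).2.
by apply: hdefect_quot; [exact: wx0 | exact: schwarz C2w | exact: schwarz C2w | exact: schwarz C2w].
Qed.

Lemma pencil_hirota_Poisson (a b lam : R) :
  is_Poisson_on (domain5 B) (pencil (P0_hirota w) (P1_hirota a b) lam)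
  <-> forall X, B X -> lam * hirota a b w X = 0.
Proof.
rewrite pencil_hirota_hfield hfield_Poisson_iff //; last first.
  by move=> X BX c; split; exact: (partial_ratio _ _ BX).1.
split=> defect0 X BX; have := hdefect_ratio a b lam BX.
  by rewrite defect0 // mul0r => <-.
by move/eqP; rewrite defect0 // mulf_eq0 sqrf_eq0 (negbTE (wx0 BX)) orbF => /eqP.
Qed.
End PencilCriterion.
End Hirota.

Theorem corollary4p2 (R : realType) (a b : R) (B : set 'rV[R]_3)
  (w : 'rV[R]_3 -> R) :
  a != 0 -> b != 0 -> a != b ->
  open B -> C2_on B w ->
  (forall X, B X -> partial w i3x X != 0) ->
  compatible_Poisson_pencil (domain5 B) (P0_hirota w) (P1_hirota a b) <->
  (forall X, B X ->
     (b - a) * partial w i3x X * partial (partial w i3y) i3z X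
     + a * partial w i3y X * partial (partial w i3z) i3x X
     - b * partial w i3z X * partial (partial w i3x) i3y X = 0).
Proof.
move=> _ _ _ oB C2w wx0.
have pencilP := pencil_hirota_Poisson oB C2w wx0 a b.
have P0_pencil : P0_hirota w = pencil (P0_hirota w) (P1_hirota a b) 0.
  by apply/funext => i; apply/funext => j; apply/funext => u; rewrite /pencil mul0r addr0.
split=> [[_ [_ /(_ 1) /pencilP hirota0]] X BX | hirota0].
  by rewrite -[LHS]mul1r; exact: hirota0.
split; first by rewrite P0_pencil; apply/pencilP => X _; rewrite mul0r.
split; first exact: P1_hirota_Poisson.
by move=> lam; apply/pencilP => X BX; rewrite /hirota hirota0 // mulr0.
Qed.
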